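(* Let $p>2$ be a prime and let $\mathrm{GF}(p)=\{0,1,\dots,p-1\}$ be the prime field. Let $J\ge 1$ and let $C_1,\dots,C_J$ be $J$ pairwise disjoint additive inverse element pairs (AIEPs) over $\mathrm{GF}(p)$, i.e. $C_i=(a_i,\,p-a_i)$ with $a_i\in\mathrm{GF}(p)\setminus\{0\}$ and the sets $\{a_i,p-a_i\}$, $1\le i\le J$, pairwise disjoint. Consider the Cartesian product $\Psi=C_1\times C_2\times\cdots\times C_J$, whose elements (codewords) are the $2^J$ tuples $(u_1,\dots,u_J)$ with $u_i\in\{a_i,p-a_i\}$. Then $\Psi$ is a $J$-user uniquely decodable AIEP (UD-AIEP) code, i.e. the map $(u_1,\dots,u_J)\mapsto \bigoplus_{i=1}^J u_i$ (sum modulo $p$) is injective on $\Psi$, if and only if the finite-field sum-patterns $\bigoplus_{i=1}^J u_i$ of all $2^J$ codewords of $\Psi$ are pairwise distinct nonzero elements of $\mathrm{GF}(p)$; and in that case $J\le \log_2(p-1)$.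
   Context: An additive inverse element pair (AIEP) over $\mathrm{GF}(p)$ is an ordered pair $(j,p-j)$ consisting of a nonzero element $j$ and its additive inverse $p-j$; since $p>2$, $j\neq p-j$. For a tuple $(u_1,\dots,u_J)$ of field elements, its finite-field sum-pattern (FFSP) is the modulo-$p$ sum $\bigoplus_{i=1}^J u_i\in\mathrm{GF}(p)$. The Cartesian product $C_1\times\cdots\times C_J$ is said to have the unique sum-pattern mapping (USPM) property, and is then called a $J$-user UD-AIEP code, if distinct tuples in it have distinct FFSPs. *)

From HB Require Import structures.
From mathcomp Require Import all_boot all_order all_algebra.
Set Implicit Arguments. Unset Strict Implicit. Unset Printing Implicit Defensive.
Import GRing.Theory.
Local Open Scope ring_scope.

(* The AIEP (a, p - a) viewed as the set {a, p - a} = {a, -a} in GF(p). *)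
Definition aiep (p : nat) (a : 'F_p) : {set 'F_p} := [set a; - a].

Definition codewords (p J : nat) (a : 'I_J -> 'F_p) : {set {ffun 'I_J -> 'F_p}} :=
  [set u : {ffun 'I_J -> 'F_p} | [forall i, u i \in aiep (a i)]].

Definition ffsp (p J : nat) (u : {ffun 'I_J -> 'F_p}) : 'F_p := \sum_(i < J) u i.

Definition UD_AIEP (p J : nat) (a : 'I_J -> 'F_p) : Prop :=
  {in codewords a &, injective (@ffsp p J)}.

(** The negation u |-> -u maps codewords to codewords and negates sum-patterns;
    since no pair contains 0 and p is odd, it fixes no codeword.  So if the
    sum-pattern is injective on codewords, none of them can sum to 0, for it would
    share that sum with its negation.  The 2^J codewords then inject into the
    p - 1 nonzero elements of GF(p). *)

From mathcomp Require Import all_boot all_order all_algebra.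
Set Implicit Arguments. Unset Strict Implicit. Unset Printing Implicit Defensive.
Import GRing.Theory.
Local Open Scope ring_scope.

Lemma eqNf (R : idomainType) (x : R) : 2%:R != 0 :> R -> (- x == x) = (x == 0).
Proof.
move=> two_neq0.
by rewrite eq_sym -subr_eq0 opprK -mulr2n -mulr_natr mulf_eq0 (negbTE two_neq0) orbF.
Qed.

Lemma Fp_two_neq0 (p : nat) : prime p -> (2 < p)%N -> 2%:R != 0 :> 'F_p.
Proof.
by move=> p_pr p_gt2; apply/eqP => two0; have := val_Fp_nat p_pr 2; rewrite two0 modn_small.
Qed.

Lemma mem_aiepN (p : nat) (b x : 'F_p) : (- x \in aiep b) = (x \in aiep b).
Proof. by rewrite !inE eqr_oppLR [- x == _]eqr_oppLR opprK orbC. Qed.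

Section Codewords.

Variables (p J : nat) (a : 'I_J -> 'F_p).
Hypotheses (p_pr : prime p) (p_gt2 : (2 < p)%N) (a_neq0 : forall i, a i != 0).

Lemma card_aiep i : #|aiep (a i)| = 2.
Proof. by rewrite cards2 eq_sym eqNf ?a_neq0 ?Fp_two_neq0. Qed.

Lemma card_codewords : #|codewords a| = (2 ^ J)%N.
Proof.
rewrite cardsE card_family foldrE big_image /=.
by under eq_bigr => i _ do rewrite card_aiep; rewrite prod_nat_const card_ord.
Qed.

Lemma codewordsN (u : {ffun 'I_J -> 'F_p}) : (- u \in codewords a) = (u \in codewords a).
Proof. by rewrite !inE; apply: eq_forallb => i; rewrite ffunE mem_aiepN. Qed.

Lemma ffspN (u : {ffun 'I_J -> 'F_p}) : ffsp (- u) = - ffsp u.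
Proof. by rewrite /ffsp -sumrN; apply: eq_bigr => i _; rewrite ffunE. Qed.

Lemma codeword_neq0 (u : {ffun 'I_J -> 'F_p}) i : u \in codewords a -> u i != 0.
Proof.
by rewrite inE => /forallP/(_ i); rewrite !inE => /orP[] /eqP ->; rewrite ?oppr_eq0 a_neq0.
Qed.

Lemma ffsp_neq0 : (0 < J)%N -> UD_AIEP a -> {in codewords a, forall u, ffsp u != 0}.
Proof.
move=> J_gt0 UD u uC; apply/eqP => sum0.
have Nu_eq_u : - u = u by apply: UD; rewrite ?codewordsN // ffspN sum0 oppr0.
have := codeword_neq0 (Ordinal J_gt0) uC.
by rewrite -eqNf ?Fp_two_neq0 // -{2}Nu_eq_u ffunE eqxx.
Qed.

Lemma UD_AIEP_exp2_leq : (0 < J)%N -> UD_AIEP a -> (2 ^ J <= p.-1)%N.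
Proof.
move=> J_gt0 UD; rewrite -card_codewords -(card_in_imset UD).
have /subset_leq_card : (@ffsp p J) @: codewords a \subset [set~ 0].
  by apply/subsetP => _ /imsetP[u uC ->]; rewrite in_setC1 ffsp_neq0.
by rewrite cardsC1 card_Fp.
Qed.

End Codewords.

Theorem theorem1 (p J : nat) (a : 'I_J -> 'F_p) :
  prime p -> (2 < p)%N -> (1 <= J)%N ->
  (forall i, a i != 0) ->
  (forall i j, i != j -> [disjoint aiep (a i) & aiep (a j)]) ->
  (UD_AIEP a <->
     ((forall u v, u \in codewords a -> v \in codewords a -> u != v ->
         ffsp u != ffsp v) /\
      (forall u, u \in codewords a -> ffsp u != 0)))
  /\ (UD_AIEP a -> (2 ^ J <= p.-1)%N).
Proof.
move=> p_pr p_gt2 J_gt0 a_neq0 _.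
split; last exact: UD_AIEP_exp2_leq.
split=> [UD | [distinct _]].
  split=> [u v uC vC | ]; last exact: ffsp_neq0.
  by apply: contra => /eqP/(UD u v uC vC)->.
by move=> u v uC vC /eqP; apply: contraTeq; apply: distinct.
Qed.
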